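(* Let $C$ be a finite set of $m$ candidates, $N=\{1,\dots,n\}$ voters with weak orders $\succcurlyeq_1,\dots,\succcurlyeq_n$ over $C$, and $k$ a positive integer. Consider the matrix $A$ whose columns are indexed by variables $x_{i,\ell,r}$ ($i\in N,\ell\in[k],r\in[m]$) and $y_c$ ($c\in C$), with one row for $\sum_{c\in C}y_c=k$ (entry $1$ at each $y_c$) and, for each $i\in N,r\in[m]$, one row for $\sum_{\ell\in[k]}x_{i,\ell,r}-\sum_{c:\ \mathrm{rank}_i(c)\le r}y_c\le0$ (entries $1$ at $x_{i,\ell,r}$ for all $\ell$, $-1$ at $y_c$ for $\mathrm{rank}_i(c)\le r$, $0$ elsewhere). If the profile is single-peaked, then $A$ is totally unimodular.
   Context: A weak order partitions $C$ into indifference classes $A_1\succ\dots\succ A_r$; a candidate in $A_t$ has rank $t$ (rank 1 = most preferred). A top-initial segment is a set $\{x:\mathrm{rank}(x)\le t\}$. A profile is single-peaked if there is a linear order (axis) of $C$ such that every top-initial segment of every voter's order is an interval of the axis. A matrix is totally unimodular if every square submatrix has determinant in $\{-1,0,1\}$. $A$ is the constraint matrix of (OWA-IP), ignoring variable bounds. *)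

From HB Require Import structures.
From mathcomp Require Import all_boot all_order all_algebra.
Set Implicit Arguments. Unset Strict Implicit. Unset Printing Implicit Defensive.
Import Order.TTheory GRing.Theory Num.Theory.

(* A weak order over C: a complete and transitive relation; pref x y = "x ≽ y". *)
Definition weak_order (C : finType) (pref : rel C) : Prop :=
  (forall x y, pref x y || pref y x) /\
  (forall x y z, pref x y -> pref y z -> pref x z).

Definition indiff_class (C : finType) (pref : rel C) (y : C) : {set C} :=
  [set z | pref z y && pref y z].

Definition rank (C : finType) (pref : rel C) (x : C) : nat :=
  #|[set indiff_class pref y | y in [set y | pref y x && ~~ pref x y]]|.+1.

Definition axis_interval (C : finType) (pos : C -> nat) (S : pred C) : Prop :=
  forall a b c, S a -> S c -> pos a <= pos b <= pos c -> S b.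

(* single-peaked profile: some linear order (axis) of C makes every
   top-initial segment of every voter an interval *)
Definition single_peaked (C : finType) (n : nat) (P : 'I_n -> rel C) : Prop :=
  exists pos : C -> nat, injective pos /\
    forall (i : 'I_n) (t : nat),
      axis_interval pos (fun x => rank (P i) x <= t).

Definition totally_unimodular (Rw Cl : finType) (M : Rw -> Cl -> int) : Prop :=
  forall (s : nat) (f : 'I_s -> Rw) (g : 'I_s -> Cl),
    injective f -> injective g ->
    (\det (\matrix_(a, b) M (f a) (g b)))%R \in [:: (-1)%R; 0%R; 1%R].

(* Constraint matrix of (OWA-IP).  Columns: inl (i, l, r) is x_{i,l,r+1},
   inr c is y_c.  Rows: None is sum_c y_c = k; Some (i, r) is the row
   sum_l x_{i,l,r+1} - sum_{c : rank_i c <= r+1} y_c <= 0. *)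
Definition owa_matrix (C : finType) (n k : nat) (P : 'I_n -> rel C)
  (row : option ('I_n * 'I_#|C|)) (col : ('I_n * 'I_k * 'I_#|C|) + C) : int :=
  match row, col with
  | None, inl _ => 0%R
  | None, inr _ => 1%R
  | Some (i, r), inl (i', _, r') => if (i' == i) && (r' == r) then 1%R else 0%R
  | Some (i, r), inr c => if rank (P i) c <= r.+1 then (-1)%R else 0%R
  end.
Arguments owa_matrix C n k P row col : clear implicits.

(* Negating the row of [sum_c y_c = k] and the [y] columns turns every square
   submatrix into a 0/1 matrix whose [x] columns contain at most one 1 and whose
   rows, restricted to the [y] columns ordered along the axis, are intervals:
   these are the top-initial segments, by single-peakedness.  Such a matrix has
   determinant in {-1, 0, 1}.  A column with at most one 1 gives a Laplace
   expansion into a smaller matrix of the same kind.  Otherwise two rows meet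
   the leftmost column; their supports are nested initial segments, and
   subtracting the smaller row from the larger one keeps the determinant and
   the interval structure while removing 1s. *)

From mathcomp Require Import all_boot all_order all_algebra.
Import Order.TTheory GRing.Theory Num.Theory.

Set Implicit Arguments.
Unset Strict Implicit.
Unset Printing Implicit Defensive.

Local Open Scope ring_scope.

Definition sub_row (R : pzRingType) m n (M : 'M[R]_(m, n)) (i r : 'I_m) :=
  \matrix_(a, b) if a == i then M i b - M r b else M a b.

Lemma det_sub_row (R : comPzRingType) n (M : 'M[R]_n) i r :
  i != r -> \det (sub_row M i r) = \det M.
Proof.
move=> neq_ir; pose C := \matrix_(a, b) if a == i then M r b else M a b.
have detC : \det C = 0.
  by apply: (determinant_alternate neq_ir) => b; rewrite !mxE eqxx eq_sym (negbTE neq_ir).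
have := determinant_multilinear
  (A := sub_row M i r) (B := M) (C := C) (i0 := i) (b := 1) (c := -1).
rewrite detC mulr0 addr0 mul1r; apply.
- by apply/rowP => b; rewrite !mxE eqxx mul1r mulN1r.
- by apply/matrixP => a b; rewrite !mxE eq_sym (negbTE (neq_lift i a)).
- by apply/matrixP => a b; rewrite !mxE eq_sym (negbTE (neq_lift i a)).
Qed.

Lemma det_sparse_col_le_minor (R : numDomainType) n (M : 'M[R]_n.+1) j :
  (forall a, `|M a j| <= 1) -> (#|[set a | M a j != 0%R]| <= 1)%N ->
  exists a, `|\det M| <= `|\det (row' a (col' j M))|.
Proof.
move=> Mj_le1 /card_le1_eqP Mj_sparse; rewrite (expand_det_col _ j).
have [a Maj | Mj0] := pickP (fun a => M a j != 0).
- exists a; rewrite (bigD1 a) //= big1 ?addr0 => [|a' neq_a'a]; last first.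
    apply/eqP; rewrite mulf_eq0; apply/orP; left; apply: contraR neq_a'a => Ma'j.
    by apply/eqP; apply: Mj_sparse; rewrite inE.
  by rewrite normrM /cofactor normrM normr_sign mul1r ler_piMl.
- exists ord0; rewrite big1 ?normr0 // => a _.
  by move/negbFE/eqP: (Mj0 a) => ->; rewrite mul0r.
Qed.

Lemma normr_det_scale (R : numDomainType) n (u v : 'I_n -> R) (A : 'M[R]_n) :
  (forall a, `|u a| = 1) -> (forall b, `|v b| = 1) ->
  `|\det (\matrix_(a, b) (u a * A a b * v b))| = `|\det A|.
Proof.
move=> u1 v1.
have -> : \matrix_(a, b) (u a * A a b * v b) =
          diag_mx (\row_a u a) *m A *m diag_mx (\row_b v b).
  by apply/matrixP => a b; rewrite mul_diag_mx mul_mx_diag !mxE.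
rewrite !det_mulmx !det_diag !normrM !normr_prod.
by rewrite !big1 ?mul1r ?mulr1 // => a _; rewrite mxE.
Qed.

Section IntervalMatrix.

Variable R : numDomainType.

Record interval_mx n (M : 'M[R]_n) (unit_col : pred 'I_n) (pos : 'I_n -> nat) :
    Prop := IntervalMx {
  interval_mx01 : forall a b, M a b = 0 \/ M a b = 1;
  interval_mx_unit : forall a a' b, unit_col b -> M a b = 1 -> M a' b = 1 -> a = a';
  interval_mx_convex : forall a b1 b2 b3,
    ~~ unit_col b1 -> ~~ unit_col b2 -> ~~ unit_col b3 ->
    (pos b1 <= pos b2 <= pos b3)%N -> M a b1 = 1 -> M a b3 = 1 -> M a b2 = 1 }.

Lemma interval_mx_neq0 n (M : 'M[R]_n) unit_col pos a b :
  interval_mx M unit_col pos -> M a b != 0 -> M a b = 1.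
Proof. by case=> M01 _ _; case: (M01 a b) => ->; rewrite ?eqxx. Qed.

Definition mx_ones n (M : 'M[R]_n) := [set ab : 'I_n * 'I_n | M ab.1 ab.2 == 1].

Lemma interval_mx_minor n (M : 'M[R]_n.+1) unit_col pos i j :
  interval_mx M unit_col pos ->
  interval_mx (row' i (col' j M)) (unit_col \o lift j) (pos \o lift j).
Proof.
case=> M01 Munit Mconvex; split=> [a b | a a' b | a b1 b2 b3]; rewrite ?mxE /=.
- exact: M01.
- by move=> unit_b Mab Ma'b; apply: lift_inj (Munit _ _ _ unit_b Mab Ma'b).
- exact: Mconvex.
Qed.

Section LeftmostColumn.

Variables (n : nat) (M : 'M[R]_n) (pos : 'I_n -> nat) (c0 : 'I_n).
Hypotheses (Mint : interval_mx M pred0 pos) (c0_min : forall b, (pos c0 <= pos b)%N).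

(* Both rows contain the leftmost column, so both are initial segments of the axis. *)
Lemma interval_mx_nested_rows a a' :
  M a c0 = 1 -> M a' c0 = 1 ->
  (forall b, M a b = 1 -> M a' b = 1) \/ (forall b, M a' b = 1 -> M a b = 1).
Proof.
case: Mint => M01 _ Mconvex Mac0 Ma'c0.
have [sub | /forallPn [b]] := boolP [forall b, (M a b == 1) ==> (M a' b == 1)].
  by left=> b /eqP Mab; apply/eqP; exact: implyP (forallP sub b) Mab.
rewrite negb_imply => /andP [/eqP Mab Ma'b]; right=> b' Ma'b'.
have [le_b'b | lt_bb'] := leqP (pos b') (pos b).
  by apply: (Mconvex a c0 b' b) => //; rewrite c0_min.
by move/eqP: Ma'b; case; apply: (Mconvex a' c0 b b') => //; rewrite c0_min ltnW.
Qed.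

Variables (i r : 'I_n).
Hypotheses (Mrc0 : M r c0 = 1) (sub_ri : forall b, M r b = 1 -> M i b = 1).

Lemma sub_row_nestedE a b :
  sub_row M i r a b = if (a == i) && (M r b == 1) then 0 else M a b.
Proof.
rewrite mxE; have [-> | _] //= := eqVneq a i.
case: (interval_mx01 Mint r b) => [-> | Mrb]; first by rewrite subr0 eq_sym oner_eq0.
by rewrite Mrb eqxx sub_ri ?subrr.
Qed.

Lemma interval_mx_sub_row : interval_mx (sub_row M i r) pred0 pos.
Proof.
case: Mint => M01 _ Mconvex; split=> [a b | // | a b1 b2 b3 _ _ _ /andP [le_b12 le_b23]].
  by rewrite sub_row_nestedE; case: ifP => _; [left | exact: M01].
rewrite !sub_row_nestedE; have [-> | _] /= := eqVneq a i; last first.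
  by move=> Mab1 Mab3; apply: (Mconvex a b1 b2 b3) => //; rewrite le_b12.
have new_one b : (if M r b == 1 then 0 else M i b) = 1 -> M r b != 1 /\ M i b = 1.
  by case: ifP => [_ /eqP | /negbT]; [rewrite eq_sym oner_eq0 | split].
move=> /new_one [Mrb1 Mib1] /new_one [_ Mib3].
have -> : M i b2 = 1 by apply: (Mconvex i b1 b2 b3) => //; rewrite le_b12.
case: ifP => // /eqP Mrb2; case/negP: Mrb1; apply/eqP.
by apply: (Mconvex r c0 b1 b2) => //; rewrite c0_min.
Qed.

Lemma card_mx_ones_sub_row : (#|mx_ones (sub_row M i r)| < #|mx_ones M|)%N.
Proof.
apply: proper_card; apply/properP; split.
  apply/subsetP => -[a b]; rewrite !inE /= sub_row_nestedE.
  by case: ifP => // _; rewrite eq_sym oner_eq0.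
exists (i, c0); first by rewrite inE /= sub_ri.
by rewrite inE /= sub_row_nestedE !eqxx Mrc0 eqxx eq_sym oner_eq0.
Qed.

End LeftmostColumn.

Lemma interval_mx_reduce n (M : 'M[R]_n.+1) pos :
  interval_mx M pred0 pos -> (forall b, 1 < #|[set a | M a b != 0%R]|)%N ->
  exists M' : 'M[R]_n.+1,
    [/\ interval_mx M' pred0 pos, \det M' = \det M & (#|mx_ones M'| < #|mx_ones M|)%N].
Proof.
move=> Mint dense; pose c0 := [arg min_(b < ord0) pos b]%N.
have c0_min b : (pos c0 <= pos b)%N by rewrite /c0; case: arg_minnP => // b0 _; apply.
have [a1 [a2 []]] := card_gt1P (dense c0); rewrite !inE.
move=> /(interval_mx_neq0 Mint) a1c0 /(interval_mx_neq0 Mint) a2c0.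
wlog sub_12 : a1 a2 a1c0 a2c0 / forall b, M a1 b = 1 -> M a2 b = 1.
  move=> nested; have [sub | sub] := interval_mx_nested_rows Mint c0_min a1c0 a2c0.
    exact: nested.
  by rewrite eq_sym; apply: nested.
move=> neq_12; exists (sub_row M a2 a1); split.
- exact: (interval_mx_sub_row Mint c0_min a1c0 sub_12).
- by rewrite det_sub_row // eq_sym.
- exact: (card_mx_ones_sub_row Mint a1c0 sub_12).
Qed.

Theorem det_interval_mx n (M : 'M[R]_n) unit_col pos :
  interval_mx M unit_col pos -> `|\det M| <= 1.
Proof.
elim: n M unit_col pos => [|n IHn] M unit_col pos Mint; first by rewrite det_mx00 normr1.
have [m] := ubnP #|mx_ones M|.
elim: m M unit_col pos Mint => // m IHm M unit_col pos Mint lt_ones_m.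
have [/existsP [j sparse_j] | /existsPn dense] :=
  boolP [exists j, #|[set a | M a j != 0%R]| <= 1]%N.
  have Mj_le1 a : `|M a j| <= 1.
    by case: (interval_mx01 Mint a j) => ->; rewrite ?normr0 ?normr1.
  have [a le_det] := det_sparse_col_le_minor Mj_le1 sparse_j.
  exact: le_trans le_det (IHn _ _ _ (interval_mx_minor a j Mint)).
have {}dense b : (1 < #|[set a | M a b != 0%R]|)%N by rewrite ltnNge dense.
have no_unit b : ~~ unit_col b.
  apply/negP => unit_b; have [a [a' []]] := card_gt1P (dense b); rewrite !inE.
  move=> /(interval_mx_neq0 Mint) Mab /(interval_mx_neq0 Mint) Ma'b.
  by rewrite (interval_mx_unit Mint unit_b Mab Ma'b) eqxx.
have Mint0 : interval_mx M pred0 pos.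
  by case: Mint => M01 _ Mconvex; split=> // a b1 b2 b3 _ _ _; apply: Mconvex.
have [M' [M'int <- lt_ones]] := interval_mx_reduce Mint0 dense.
exact: IHm M'int (leq_trans lt_ones lt_ones_m).
Qed.

End IntervalMatrix.

Lemma int_normr_le1 (x : int) : `|x| <= 1 -> x \in [:: -1; 0; 1].
Proof. by case: x => [[|[|?]]|[|?]]. Qed.

Section OwaMatrix.

Variables (C : finType) (n k : nat) (P : 'I_n -> rel C).

Local Notation owa := (owa_matrix C n k P).

Definition owa_row_sign (row : option ('I_n * 'I_#|C|)) : int :=
  if row is Some _ then 1 else -1.

Definition owa_col_sign (col : ('I_n * 'I_k * 'I_#|C|) + C) : int :=
  if col is inl _ then 1 else -1.

Lemma owa_matrix_signE row col :
  owa row col = owa_row_sign row * `|owa row col| * owa_col_sign col.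
Proof. by case: row => [[i r]|]; case: col => [[[i' l] r']|c] //=; case: ifP. Qed.

Lemma interval_mx_owa s (f : 'I_s -> option ('I_n * 'I_#|C|))
    (g : 'I_s -> ('I_n * 'I_k * 'I_#|C|) + C) (axis : C -> nat) :
  injective f -> (forall i t, axis_interval axis (fun x => rank (P i) x <= t)%N) ->
  interval_mx (\matrix_(a, b) `|owa (f a) (g b)|)
    [pred b | if g b is inl _ then true else false]
    (fun b => if g b is inr c then axis c else 0%N).
Proof.
move=> f_inj axis_sp; split=> [a b | a a' b | a b1 b2 b3]; rewrite ?mxE /=.
- case: (f a) => [[i r]|]; case: (g b) => [[[i' l] r']|c] /=; try case: ifP;
    by [left | right].
- case: (g b) => [[[i' l] r']|c] // _.
  case Ea: (f a) => [[i r]|] //; case Ea': (f a') => [[i2 r2]|] //=.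
  case: ifP => // /andP [/eqP eq_i /eqP eq_r] _.
  case: ifP => // /andP [/eqP eq_i2 /eqP eq_r2] _.
  by apply: f_inj; rewrite Ea Ea' -eq_i -eq_r -eq_i2 -eq_r2.
- case: (g b1) (g b2) (g b3) => [//|c1] [//|c2] [//|c3] _ _ _ le_c123.
  case: (f a) => [[i r]|] //=; case: ifP => // rank_c1 _; case: ifP => // rank_c3 _.
  by rewrite (axis_sp i r.+1 c1 c2 c3).
Qed.

End OwaMatrix.

Local Close Scope ring_scope.

Theorem mainTheorem7 (C : finType) (n k : nat) (P : 'I_n -> rel C) :
  0 < k ->
  (forall i, weak_order (P i)) ->
  single_peaked P ->
  totally_unimodular (owa_matrix C n k P).
Proof.
move=> _ _ [axis [_ axis_sp]] s f g f_inj _; apply: int_normr_le1.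
set A := (\matrix_(a, b) `|owa_matrix C n k P (f a) (g b)|)%R.
have -> : (\matrix_(a, b) owa_matrix C n k P (f a) (g b) =
           \matrix_(a, b) (owa_row_sign (f a) * A a b * owa_col_sign (g b)))%R.
  by apply/matrixP => a b; rewrite !mxE -owa_matrix_signE.
rewrite normr_det_scale => [|a|b]; last by case: (g b).
- exact: det_interval_mx (interval_mx_owa g f_inj axis_sp).
- by case: (f a).
Qed.
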